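(* Let $M=M_n\to\infty$ as $n\to\infty$. Assume that (i) the combining function is of the form $\psi(p_1,\dots,p_r)=\sum_{j=1}^r w_j\varphi(p_j)$ with weights $w_j>0$, where $\varphi$ is decreasing, non-negative and one-to-one from $(0,1)$ to $(0,\infty)$; (ii) there exists $j_0\in\{1,\dots,r\}$ such that the null hypothesis $H_0^{(j_0)}$ does not hold and $\Pr(T_{n,j_0}^{[1]}\ge T_{n,j_0})\to0$; (iii) for every $j\in\{1,\dots,r\}$, the bootstrap replicates $T_{n,j}^{[1]},\dots,T_{n,j}^{[M_n]}$ contain no ties. Then $p_{n,M_n}(W_{n,M_n}^{[0]})\to0$ in probability.
   Context: Setting: Let $\mathbf{X}_n$ denote the available data. For $j\in\{1,\dots,r\}$, let $T_{n,j}=T_{n,j}(\mathbf{X}_n)$ be real-valued test statistics, large values of $T_{n,j}$ providing evidence against a null hypothesis $H_0^{(j)}$; let $\mathbf{T}_n=(T_{n,1},\dots,T_{n,r})$. Let $\mathbf{V}_n^{[1]},\mathbf{V}_n^{[2]},\dots$ be i.i.d. random vectors representing the additional randomness of a resampling mechanism (independent of the data) and let $\mathbf{T}_n^{[i]}=(T_{n,1}^{[i]},\dots,T_{n,r}^{[i]})=\mathbf{T}_n^{[i]}(\mathbf{X}_n,\mathbf{V}_n^{[i]})$, $i\ge1$, be bootstrap replicates of $\mathbf{T}_n$; set $\mathbf{T}_n^{[0]}=\mathbf{T}_n$. For an integer $M$, $i\in\{0,\dots,M\}$, $j\in\{1,\dots,r\}$, $$p_{n,M}(T_{n,j}^{[i]})=\frac{1}{M+1}\Big\{\frac12+\sum_{k=1}^M\mathbf{1}(T_{n,j}^{[k]}\ge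 T_{n,j}^{[i]})\Big\},\qquad W_{n,M}^{[i]}=\psi\{p_{n,M}(T_{n,1}^{[i]}),\dots,p_{n,M}(T_{n,r}^{[i]})\},$$ and $p_{n,M}(W_{n,M}^{[0]})=\frac1M\sum_{k=1}^M\mathbf{1}(W_{n,M}^{[k]}\ge W_{n,M}^{[0]})$. *)

From HB Require Import structures.
From mathcomp Require Import all_boot all_order all_algebra.
From mathcomp Require Import all_classical all_reals all_analysis.
Set Implicit Arguments. Unset Strict Implicit. Unset Printing Implicit Defensive.
Import Order.TTheory GRing.Theory Num.Theory.
Local Open Scope classical_set_scope.
Local Open Scope ring_scope.

Definition pval_stat (R : realType) (M : nat) (t : nat -> R) (x : R) : R :=
  (2^-1 + \sum_(1 <= k < M.+1) (nat_of_bool (x <= t k))%:R) / (M.+1)%:R.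

(* W_{n,M}^{[i]} = psi(p_{n,M}(T_{n,1}^{[i]}), ..., p_{n,M}(T_{n,r}^{[i]})),
   where Tall k j = T_{n,j}^{[k]} (k = 0 is the original statistic). *)
Definition Wstat (R : realType) (r M : nat) (psi : ('I_r -> R) -> R)
  (Tall : nat -> 'I_r -> R) (i : nat) : R :=
  psi (fun j => pval_stat M (fun k => Tall k j) (Tall i j)).

Definition pval_W (R : realType) (M : nat) (Wv : nat -> R) : R :=
  (\sum_(1 <= k < M.+1) (nat_of_bool (Wv 0%N <= Wv k))%:R) / M%:R.

Definition lin_comb (R : realType) (r : nat) (w : 'I_r -> R) (phi : R -> R)
  (p : 'I_r -> R) : R := \sum_(j < r) w j * phi (p j).

Definition indep_data_boot (dO : measure_display) (Om : measurableType dO)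
  (R : realType) (P : probability Om R)
  (dX : measure_display) (XT : measurableType dX)
  (dV : measure_display) (VT : measurableType dV)
  (X : Om -> XT) (V : nat -> Om -> VT) : Prop :=
  forall (A : set XT) (B : nat -> set VT) (s : seq nat),
    measurable A -> (forall k, measurable (B k)) -> uniq s ->
    all (fun k => 0 < k)%N s ->
    P (X @^-1` A `&` \bigcap_(k in [set` s]) (V k @^-1` B k)) =
    (P (X @^-1` A) * \prod_(k <- s) P (V k @^-1` B k))%E.

Definition ident_distr_boot (dO : measure_display) (Om : measurableType dO)
  (R : realType) (P : probability Om R)
  (dV : measure_display) (VT : measurableType dV) (V : nat -> Om -> VT) : Prop :=
  forall (k : nat) (B : set VT), (0 < k)%N -> measurable B ->
    P (V k @^-1` B) = P (V 1%N @^-1` B).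

Definition boot_family (Om XT VT : Type) (R : realType) (r : nat)
  (Tstat : XT -> 'I_r -> R) (Tboot : XT -> VT -> 'I_r -> R)
  (X : Om -> XT) (V : nat -> Om -> VT) (w : Om) : nat -> 'I_r -> R :=
  fun k j => if k == 0%N then Tstat (X w) j else Tboot (X w) (V k w) j.

From HB Require Import structures.
From mathcomp Require Import all_boot all_order all_algebra.
From mathcomp Require Import all_classical all_reals all_analysis.
From mathcomp Require Import measurable_realfun ring lra.
Import Order.TTheory GRing.Theory Num.Theory.
Local Open Scope classical_set_scope.
Local Open Scope ring_scope.

(* Fix x with 2 r x < eps and dl with w_j0 phi(dl) > (sum_j w_j) phi(x). When the marginal
   p-value of T_{n,j0} is at most dl, W^[0] >= w_j0 phi(dl), so every replicate k with
   W^[k] >= W^[0] has some marginal p-value p(T_{n,j}^[k]) <= x. For each j there are at most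
   x (M + 1) such k: they all lie above the smallest of them, whose p-value <= x bounds their
   number. Hence p(W^[0]) <= r x (M + 1) / M < eps, and the event p(W^[0]) >= eps is contained
   in the event that the marginal p-value of T_{n,j0} exceeds dl. Markov's inequality for the
   number of replicates exceeding T_{n,j0}, together with the fact that every (X_n, V_n^[k]) has
   the law of (X_n, V_n^[1]), bounds its probability by (2 / dl) P(T_{n,j0}^[1] >= T_{n,j0}). *)

Section rank_counting.
Context {disp : Order.disp_t} {T : orderType disp} {I : eqType}.
Implicit Types (s : seq I) (a : pred I) (t : I -> T).
Local Open Scope order_scope.

Lemma has_argmin t s a : has a s ->
  exists2 k, a k & {in s, forall l, a l -> t k <= t l}.
Proof.
elim: s => //= i s IH.
have [/IH [k ak kmin] _ | /hasPn nas] := boolP (has a s).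
  have [/andP [ai tik] | ti_gt] := boolP (a i && (t i <= t k)).
    exists i => // l; rewrite inE => /predU1P [-> // | ls al].
    exact: le_trans tik (kmin l ls al).
  exists k => // l; rewrite inE => /predU1P [-> ai | ]; last exact: kmin.
  by move: ti_gt; rewrite ai /= -ltNge => /ltW.
rewrite orbF => ai; exists i => // l; rewrite inE => /predU1P [-> // | ls].
by rewrite (negbTE (nas l ls)).
Qed.

Lemma count_le_rank t s a : has a s ->
  exists2 k, a k & (count a s <= count (fun l => (t k <= t l)%O) s)%N.
Proof.
move=> /(has_argmin t) [k ak kmin]; exists k => //.
have -> : count a s = count (predI a (fun l => t k <= t l)) s.
  by apply: eq_in_count => l ls /=; case al: (a l); rewrite //= (kmin l ls al).
by apply: sub_count => l /andP [].
Qed.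

End rank_counting.

Lemma count_le_sum_count {T : Type} {J : finType} (s : seq T) {a : pred T}
    {b : J -> pred T} :
  (forall x, a x -> exists j, b j x) -> (count a s <= \sum_j count (b j) s)%N.
Proof.
move=> cover; elim: s => [|x s IH] /=; first by rewrite big1.
rewrite big_split leq_add //=; case ax: (a x) => //.
by have [j bjx] := cover x ax; rewrite (bigD1 j) //= bjx.
Qed.

Section bootstrap_pvalues.
Context {R : realType}.

Lemma pval_statE m (t : nat -> R) x :
  pval_stat m t x = (2^-1 + (count (fun k => x <= t k) (index_iota 1 m.+1))%:R) / m.+1%:R.
Proof.
rewrite /pval_stat -sum1_count natr_sum [in RHS]big_mkcond.
by congr ((_ + _) / _); apply: eq_bigr => k _; case: ifP.
Qed.

Lemma pval_WE m (Wv : nat -> R) :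
  pval_W m Wv = (count (fun k => Wv 0%N <= Wv k) (index_iota 1 m.+1))%:R / m%:R.
Proof.
rewrite /pval_W -sum1_count natr_sum [in RHS]big_mkcond.
by congr (_ / _); apply: eq_bigr => k _; case: ifP.
Qed.

Lemma pval_stat_itv m (t : nat -> R) x : pval_stat m t x \in `]0, 1[.
Proof.
rewrite in_itv /= pval_statE; set c := count _ _.
have cm : c%:R <= m%:R :> R.
  by rewrite ler_nat (leq_trans (count_size _ _)) // size_iota subn1.
have m_gt0 : 0 < m.+1%:R :> R by rewrite ltr0n.
have half_lt1 : 2^-1 < 1 :> R by rewrite invf_lt1 ?ltr1n ?ltr0n.
apply/andP; split; first by apply: divr_gt0; rewrite // ltr_wpDr.
by rewrite ltr_pdivrMr // mul1r -[m.+1]addn1 natrD addrC ler_ltD.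
Qed.

Lemma count_pval_stat_le m (t : nat -> R) x : 0 <= x ->
  (count (fun k => pval_stat m t (t k) <= x) (index_iota 1 m.+1))%:R
    <= x * m.+1%:R.
Proof.
move=> x_ge0; set a := fun k => _.
have [/(count_le_rank t) [k] | ] := boolP (has a (index_iota 1 m.+1)).
  rewrite /a pval_statE ler_pdivrMr ?ltr0n // => rank_k.
  rewrite -(ler_nat R) => /le_trans; apply; lra.
by rewrite has_count -leqNgt leqn0 => /eqP ->; rewrite mulr_ge0.
Qed.

Lemma pval_stat_eq m (t1 t2 : nat -> R) x1 x2 :
  (forall k, (k <= m)%N -> (x1 <= t1 k) = (x2 <= t2 k)) ->
  pval_stat m t1 x1 = pval_stat m t2 x2.
Proof.
move=> same; rewrite !pval_statE; congr ((_ + _%:R) / _).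
by apply: eq_in_count => k; rewrite mem_index_iota => /andP [_ /same].
Qed.

Definition same_ranks {r} m (T1 T2 : nat -> 'I_r -> R) :=
  forall i k j, (i <= m)%N -> (k <= m)%N -> (T1 i j <= T1 k j) = (T2 i j <= T2 k j).

Lemma pval_W_same_ranks r m (psi : ('I_r -> R) -> R) (T1 T2 : nat -> 'I_r -> R) :
  same_ranks m T1 T2 -> pval_W m (Wstat m psi T1) = pval_W m (Wstat m psi T2).
Proof.
move=> same; have W12 i : (i <= m)%N -> Wstat m psi T1 i = Wstat m psi T2 i.
  by move=> im; congr psi; apply/funext => j; apply: pval_stat_eq => k; exact: same.
rewrite !pval_WE; congr (_%:R / _); apply: eq_in_count => k.
by rewrite mem_index_iota => /andP [_ km]; rewrite !W12.
Qed.

Section linear_combination.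
Variables (r : nat) (w : 'I_r -> R) (phi : R -> R).
Hypothesis w_gt0 : forall j, 0 < w j.
Hypothesis phi_nonincr : {in `]0, 1[ &, forall x y, x <= y -> phi y <= phi x}.
Hypothesis phi_ge0 : {in `]0, 1[, forall x, 0 <= phi x}.

Lemma lin_comb_ge_term (p : 'I_r -> R) j0 : (forall j, p j \in `]0, 1[) ->
  w j0 * phi (p j0) <= lin_comb w phi p.
Proof.
move=> p01; rewrite /lin_comb (bigD1 j0) //= lerDl.
by apply: sumr_ge0 => j _; exact: mulr_ge0 (ltW (w_gt0 j)) (phi_ge0 _ (p01 j)).
Qed.

Lemma lin_comb_le (p : 'I_r -> R) (x : R) : x \in `]0, 1[ -> (forall j, p j \in `]0, 1[) ->
  (forall j, x <= p j) -> lin_comb w phi p <= (\sum_j w j) * phi x.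
Proof.
move=> x01 p01 xp; rewrite /lin_comb mulr_suml; apply: ler_sum => j _.
by rewrite ler_pM2l //; exact: phi_nonincr _ _ x01 (p01 j) (xp j).
Qed.

Lemma pval_W_le m (T : nat -> 'I_r -> R) j0 (x dl : R) :
  x \in `]0, 1[ -> dl \in `]0, 1[ -> (\sum_j w j) * phi x < w j0 * phi dl ->
  pval_stat m (fun k => T k j0) (T 0%N j0) <= dl ->
  pval_W m (Wstat m (lin_comb w phi) T) <= r%:R * x * m.+1%:R / m%:R.
Proof.
move=> x01 dl01 phi_x_dl p0_le.
set p := fun i j => pval_stat m (fun k => T k j) (T i j).
have p01 i j : p i j \in `]0, 1[ := pval_stat_itv _ _ _.
set W := Wstat m (lin_comb w phi) T.
have W0_ge : w j0 * phi dl <= W 0%N.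
  apply: le_trans (lin_comb_ge_term _ j0 (p01 0%N)).
  by rewrite ler_pM2l //; exact: phi_nonincr _ _ (p01 0%N j0) dl01 p0_le.
have cover k : W 0%N <= W k -> exists j, p k j <= x.
  move=> W0k; have [/existsP [j] | /existsPn x_lt] := boolP [exists j, p k j <= x].
    by exists j.
  have: W k < W 0%N.
    apply: le_lt_trans (lt_le_trans phi_x_dl W0_ge).
    by apply: lin_comb_le x01 (p01 k) _ => j; apply: ltW; rewrite ltNge x_lt.
  by move=> /lt_le_trans /(_ W0k); rewrite ltxx.
have x_ge0 : 0 <= x by move: x01; rewrite in_itv => /andP [/ltW].
rewrite pval_WE ler_wpM2r ?invr_ge0 //.
have := count_le_sum_count (index_iota 1 m.+1) cover.
rewrite -(ler_nat R) natr_sum => /le_trans; apply.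
apply: (@le_trans _ _ (\sum_(j < r) x * m.+1%:R)).
  by apply: ler_sum => j _; exact: count_pval_stat_le.
by rewrite sumr_const card_ord -mulrA mulr_natl.
Qed.

Lemma pval_stat_gt_of_pval_W_ge m (T : nat -> 'I_r -> R) j0 (x dl eps : R) :
  (0 < m)%N -> x \in `]0, 1[ -> dl \in `]0, 1[ ->
  (\sum_j w j) * phi x < w j0 * phi dl -> 2 * r%:R * x < eps ->
  eps <= `|pval_W m (Wstat m (lin_comb w phi) T)| ->
  dl < pval_stat m (fun k => T k j0) (T 0%N j0).
Proof.
move=> m_gt0 x01 dl01 phi_x_dl rx_eps; rewrite ltNge; apply: contraL => p0_le.
have pW_le := pval_W_le m T j0 x dl x01 dl01 phi_x_dl p0_le.
have pW_ge0 : 0 <= pval_W m (Wstat m (lin_comb w phi) T).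
  by rewrite pval_WE divr_ge0.
have rx_ge0 : 0 <= r%:R * x by rewrite mulr_ge0 //; move: x01; rewrite in_itv => /andP [/ltW].
have m_ge1 : 1 <= m%:R :> R by rewrite ler1n.
have : r%:R * x * m.+1%:R / m%:R <= 2 * r%:R * x.
  by rewrite ler_pdivrMr ?ltr0n // -natr1; nra.
rewrite ger0_norm // -ltNge; lra.
Qed.

End linear_combination.

End bootstrap_pvalues.

Section measurable_patterns.
Context {d : measure_display} {T : measurableType d}.

Lemma measurable_ler_set {R : realType} {f g : T -> R} :
  measurable_fun setT f -> measurable_fun setT g -> measurable [set x | f x <= g x].
Proof.
move=> mf mg; have := measurable_fun_ler mf mg measurableT (Y := [set true]) Logic.I.
by rewrite setTI; congr measurable; apply/seteqP; split.
Qed.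

Lemma measurable_pattern_invariant {J : finType} (B : J -> set T) (Q : set T) :
  (forall i, measurable (B i)) ->
  (forall x y, (forall i, B i x <-> B i y) -> Q x -> Q y) -> measurable Q.
Proof.
move=> mB Qinv.
pose pattern x : {ffun J -> bool} := [ffun i => `[< B i x >]].
pose cell (f : {ffun J -> bool}) := \bigcap_(i in setT) (if f i then B i else ~` B i).
have cell_pattern x y : cell (pattern x) y <-> forall i, B i x <-> B i y.
  split=> [xy i | xy i _]; last by rewrite ffunE; case: asboolP => /xy.
  by have := xy i Logic.I; rewrite ffunE; case: asboolP => Bix; split.
have -> : Q = \bigcup_(f in pattern @` Q) cell f.
  apply/seteqP; split=> [x Qx | y [_ [x Qx <-]] /cell_pattern xy].
    by exists (pattern x); [exists x | exact/cell_pattern].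
  exact: Qinv Qx.
apply: fin_bigcup_measurable; first exact: finite_finset.
move=> f _; apply: fin_bigcap_measurable; first exact: finite_finset.
by move=> i _; case: (f i); [exact: mB | exact/measurableC/mB].
Qed.

End measurable_patterns.

Section pushforward_prod.
Local Open Scope ereal_scope.
Context d (T : measurableType d) (R : realType) (mu : {finite_measure set T -> \bar R}).
Context d1 d2 (T1 : measurableType d1) (T2 : measurableType d2).
Variables f g : T -> T1 * T2.
Hypotheses (mf : measurable_fun setT f) (mg : measurable_fun setT g).

Lemma pushforward_prod_eq :
  (forall A B, measurable A -> measurable B ->
     mu (f @^-1` (A `*` B)) = mu (g @^-1` (A `*` B))) ->
  forall S, measurable S -> mu (f @^-1` S) = mu (g @^-1` S).
Proof.
move=> rect S mS.
pose C := [set A `*` B | A in measurable & B in measurable] : set (set (T1 * T2)).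
have CI : setI_closed C.
  move=> _ _ [A1 mA1 [B1 mB1 <-]] [A2 mA2 [B2 mB2 <-]]; rewrite -setXI.
  by exists (A1 `&` A2); [exact: measurableI | exists (B1 `&` B2) => //; exact: measurableI].
apply: (measure_unique C (fun=> setT) _ CI _ _ (pushforward mu f) (pushforward mu g)) => //.
- by rewrite measurable_prod_measurableType.
- by move=> _; exists setT => //; exists setT => //; rewrite setXTT.
- by rewrite bigcup_const.
- by move=> _ [A mA [B mB <-]]; exact: rect.
- move=> _; change (mu (f @^-1` setT) < +oo).
  by rewrite preimage_setT -ge0_fin_numE ?fin_num_measure.
Qed.

End pushforward_prod.

Section markov_count.
Local Open Scope ereal_scope.
Context {d : measure_display} {T : measurableType d} {R : realType}.
Variable mu : {measure set T -> \bar R}.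

Lemma measure_count_ge {I : Type} (b : I -> T -> bool) (s : seq I) (c : R) :
  (forall i, measurable [set x | b i x]) ->
  c%:E * mu [set x | (c <= (count (b ^~ x) s)%:R)%R] <= \sum_(i <- s) mu [set x | b i x].
Proof.
move=> mb; have [c_le0 | c_gt0] := leP c 0%R.
  apply: (@le_trans _ _ 0); first by rewrite mule_le0_ge0 ?lee_fin.
  by apply: sume_ge0 => i _; exact: measure_ge0.
pose A i := [set x | b i x].
have count_indic x : (count (b ^~ x) s)%:R = (\sum_(i <- s) \1_(A i) x)%R :> R.
  rewrite -sum1_count natr_sum big_mkcond /=; apply: eq_bigr => i _.
  rewrite indicE; case: (boolP (b i x)) => bix; first by rewrite (@mem_set _ (A i) x bix).
  by rewrite (@memNset _ (A i) x) //; exact/negP.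
have m_count : measurable_fun setT (fun x => \sum_(i <- s) \1_(A i) x : R)%R.
  by apply: measurable_sum => i; exact/measurable_indic/mb.
under eq_set do rewrite count_indic.
set E := [set x | _].
have mE := measurable_ler_set (measurable_cst c) m_count.
rewrite -integral_cst //.
apply: (@le_trans _ _ (\int[mu]_(x in E) (\sum_(i <- s) \1_(A i) x)%:E)).
  apply: ge0_le_integral => //.
  - by move=> x _; rewrite lee_fin ltW.
  - by apply/measurable_EFinP; exact: measurable_funS m_count.
have int_count : \int[mu]_x (\sum_(i <- s) \1_(A i) x)%:E = \sum_(i <- s) mu (A i).
  under eq_integral do rewrite -sumEFin.
  rewrite ge0_integral_sum //.
  - by apply: eq_bigr => i _; rewrite integral_indic ?setIT //; exact: mb.
  - by move=> i; apply/measurable_EFinP; exact/measurable_indic/mb.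
rewrite -int_count; apply: ge0_subset_integral => //.
- exact/measurable_EFinP.
- by move=> x _; rewrite lee_fin sumr_ge0 // => i _; rewrite indicE.
Qed.

End markov_count.

Section bootstrap_events.
Context {d : measure_display} {Om : measurableType d} {R : realType}.
Context {dX : measure_display} {XT : measurableType dX}.
Context {dV : measure_display} {VT : measurableType dV} {r : nat}.
Context {P : probability Om R} {X : Om -> XT} {V : nat -> Om -> VT}.
Context {Tstat : XT -> 'I_r -> R} {Tboot : XT -> VT -> 'I_r -> R}.
Hypothesis mX : measurable_fun setT X.
Hypothesis mV : forall k, (0 < k)%N -> measurable_fun setT (V k).
Hypothesis mTstat : forall j, measurable_fun setT (fun x => Tstat x j).
Hypothesis mTboot : forall j, measurable_fun setT (fun xv : XT * VT => Tboot xv.1 xv.2 j).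
Hypothesis indep : indep_data_boot P X V.
Hypothesis ident : ident_distr_boot P V.
Local Notation T := (boot_family Tstat Tboot X V).

Lemma measurable_boot_family k j : measurable_fun setT (fun om => T om k j).
Proof.
case: k => [|k]; first exact: measurableT_comp (mTstat j) mX.
exact: measurableT_comp (mTboot j) (measurable_fun_pair mX (mV k.+1 isT)).
Qed.

(* phi is not assumed measurable: the events of interest are measurable because they only
   depend on the order pattern of the first m + 1 replicates. *)
Lemma measurable_rank_event m (Q : (nat -> 'I_r -> R) -> Prop) :
  (forall T1 T2, same_ranks m T1 T2 -> Q T1 -> Q T2) -> measurable [set om | Q (T om)].
Proof.
move=> Qinv; pose B (ikj : 'I_m.+1 * 'I_m.+1 * 'I_r) :=
  [set om | T om ikj.1.1 ikj.2 <= T om ikj.1.2 ikj.2].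
apply: (measurable_pattern_invariant B).
  by move=> ikj; apply: measurable_ler_set; exact: measurable_boot_family.
move=> om om' same; apply: Qinv => i k j im km.
have [] := same (Ordinal (im : (i < m.+1)%N), Ordinal (km : (k < m.+1)%N), j).
by move=> *; apply/idP/idP.
Qed.

Lemma prob_boot_exceed k j : (0 < k)%N ->
  P [set om | T om 0%N j <= T om k j] =
  P [set om | Tstat (X om) j <= Tboot (X om) (V 1%N om) j].
Proof.
move=> k_gt0; pose S := [set xv : XT * VT | Tstat xv.1 j <= Tboot xv.1 xv.2 j].
have -> : [set om | T om 0%N j <= T om k j] = (fun om => (X om, V k om)) @^-1` S.
  by case: k k_gt0.
have -> : [set om | Tstat (X om) j <= Tboot (X om) (V 1%N om) j] =
    (fun om => (X om, V 1%N om)) @^-1` S by [].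
apply: pushforward_prod_eq => [||A B mA mB|].
- exact: measurable_fun_pair mX (mV _ k_gt0).
- exact: measurable_fun_pair mX (mV 1%N isT).
- have indepXV l : (0 < l)%N ->
      P (X @^-1` A `&` V l @^-1` B) = (P (X @^-1` A) * P (V l @^-1` B))%E.
    move=> l_gt0; have := indep A (fun=> B) [:: l] mA (fun=> mB) isT.
    rewrite /= andbT big_seq1 => /(_ l_gt0) <-; congr (P (_ `&` _)).
    rewrite (_ : [set` [:: l]] = [set l]) ?bigcap_set1 //.
    by apply/seteqP; split=> i /=; rewrite mem_seq1 => /eqP.
  change (P (X @^-1` A `&` V k @^-1` B) = P (X @^-1` A `&` V 1%N @^-1` B)).
  by rewrite !indepXV // (ident k B k_gt0 mB).
- apply: measurable_ler_set; last exact: mTboot.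
  exact: measurableT_comp (mTstat j) measurable_fst.
Qed.

Lemma measurable_pval_stat_gt m (j : 'I_r) (dl : R) :
  measurable [set om | dl < pval_stat m (fun k => T om k j) (T om 0%N j)].
Proof.
apply: (measurable_rank_event m (fun U => dl < pval_stat m (fun k => U k j) (U 0%N j))).
move=> T1 T2 same; rewrite (@pval_stat_eq _ m _ (fun k => T2 k j) _ (T2 0%N j)) // => k km.
exact: same.
Qed.

Lemma prob_pval_stat_gt m (j : 'I_r) (dl : R) : 0 < dl -> 1 <= dl * m%:R ->
  (P [set om | (dl < pval_stat m (fun k => T om k j) (T om 0%N j))%R] <=
   (2 / dl)%:E * P [set om | (Tstat (X om) j <= Tboot (X om) (V 1%N om) j)%R])%E.
Proof.
move=> dl_gt0 dlm.
have m_gt0 : 0 < m%:R :> R by move: dlm; case: m => [|m]; rewrite ?mulr0 ?ler10 ?ltr0n.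
set q := P [set om | (Tstat (X om) j <= _)%R].
pose b k om := T om 0%N j <= T om k j.
(* On the event, more than dl (m + 1) - 1/2 >= c replicates exceed T^[0]. *)
pose c := dl * m%:R / 2.
have c_gt0 : 0 < c by rewrite divr_gt0 ?mulr_gt0.
set E := [set om | dl < _].
pose E' := [set om | c <= (count (b ^~ om) (index_iota 1 m.+1))%:R].
have mE : measurable E := measurable_pval_stat_gt m j dl.
have mE' : measurable E'.
  apply: (measurable_rank_event m
    (fun U => c <= (count (fun k => U 0%N j <= U k j) (index_iota 1 m.+1))%:R)).
  move=> T1 T2 same; rewrite (@eq_in_count _ _ (fun k => T2 0%N j <= T2 k j)) // => k.
  by rewrite mem_index_iota => /andP [_ km]; exact: same.
have E_sub : E `<=` E'.
  move=> om; rewrite /E /E' /= pval_statE ltr_pdivlMr ?ltr0n // -natr1 mulrDr mulr1.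
  rewrite /c; lra.
have mb k : measurable [set om | b k om].
  exact: measurable_ler_set (measurable_boot_family _ _) (measurable_boot_family _ _).
have sum_q : (\sum_(k <- index_iota 1 m.+1) P [set om | b k om] = m%:R%:E * q)%E.
  rewrite big_seq (eq_bigr (fun=> q)) => [|k]; last first.
    by rewrite mem_index_iota => /andP [k_gt0 _]; exact: prob_boot_exceed.
  by rewrite -big_seq sumr_const_nat subn1 mule_natl.
have := measure_count_ge P b (index_iota 1 m.+1) c mb.
rewrite sum_q -lee_pdivlMl // muleA -EFinM.
have -> : c^-1 * m%:R = 2 / dl by rewrite /c; field; rewrite ?gt_eqF.
exact: le_trans (le_measure _ (mem_set mE) (mem_set mE') E_sub).
Qed.

Lemma prob_pval_W_ge m (w : 'I_r -> R) (phi : R -> R) j0 (x dl eps : R) :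
  (forall j, 0 < w j) ->
  {in `]0, 1[ &, forall x y, x <= y -> phi y <= phi x} ->
  {in `]0, 1[, forall x, 0 <= phi x} ->
  x \in `]0, 1[ -> dl \in `]0, 1[ ->
  (\sum_j w j) * phi x < w j0 * phi dl -> 2 * r%:R * x < eps -> 1 <= dl * m%:R ->
  (P [set om | (eps <= `|pval_W m (Wstat m (lin_comb w phi) (T om))|)%R] <=
   (2 / dl)%:E * P [set om | (Tstat (X om) j0 <= Tboot (X om) (V 1%N om) j0)%R])%E.
Proof.
move=> w_gt0 phi_nonincr phi_ge0 x01 dl01 phi_x_dl rx_eps dlm.
have dl_gt0 : 0 < dl by move: dl01; rewrite in_itv => /andP [].
have m_gt0 : (0 < m)%N by move: dlm; case: m => [|m]; rewrite ?mulr0 ?ler10.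
apply: le_trans (prob_pval_stat_gt m j0 dl dl_gt0 dlm).
apply: le_measure; rewrite ?inE.
- apply: (measurable_rank_event m
    (fun U => eps <= `|pval_W m (Wstat m (lin_comb w phi) U)|)).
  by move=> T1 T2 /pval_W_same_ranks ->.
- exact: measurable_pval_stat_gt.
- by move=> om /=; apply: (@pval_stat_gt_of_pval_W_ge _ r w phi _ _ _ m (T om) j0 x).
Qed.

End bootstrap_events.

Lemma exists_itv01_mul_lt (R : realFieldType) (a eps : R) : 0 < a -> 0 < eps ->
  exists2 x, x \in `]0, 1[ & a * x < eps.
Proof.
move=> a_gt0 eps_gt0; exists (eps / (eps + a)).
  by rewrite in_itv /= divr_gt0 ?ltr_pdivrMr ?mul1r //=; lra.
by rewrite mulrA ltr_pdivrMr; nra.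
Qed.

Theorem proposition2
  (R : realType) (dO : measure_display) (Om : measurableType dO)
  (P : probability Om R) (r : nat)
  (* data X_n, with values in a measurable space depending on n *)
  (dX : nat -> measure_display) (XT : forall n, measurableType (dX n))
  (X : forall n, Om -> XT n)
  (* resampling randomness V_n^{[k]}, k >= 1 *)
  (dV : nat -> measure_display) (VT : forall n, measurableType (dV n))
  (V : forall n, nat -> Om -> VT n)
  (* test statistics T_n = T_n(X_n) and replicates T_n^{[k]} = T_n^{[k]}(X_n, V_n^{[k]}) *)
  (Tstat : forall n, XT n -> 'I_r -> R)
  (Tboot : forall n, XT n -> VT n -> 'I_r -> R)
  (* null hypotheses H_0^{(j)} *)
  (H0 : 'I_r -> Prop)
  (M : nat -> nat) (w : 'I_r -> R) (phi : R -> R) (j0 : 'I_r) :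
  (* standing assumptions of the setting *)
  (forall n, measurable_fun setT (X n)) ->
  (forall n k, (0 < k)%N -> measurable_fun setT (V n k)) ->
  (forall n j, measurable_fun setT (fun x => Tstat n x j)) ->
  (forall n j, measurable_fun setT (fun xv : (XT n * VT n)%type => Tboot n xv.1 xv.2 j)) ->
  (forall n, indep_data_boot P (X n) (V n)) ->
  (forall n, ident_distr_boot P (V n)) ->
  (* M_n -> oo *)
  (forall K : nat, exists N : nat, forall n, (N <= n)%N -> (K <= M n)%N) ->
  (* (i) *)
  (forall j, 0 < w j) ->
  {in `]0, 1[ &, forall x y, x <= y -> phi y <= phi x} ->
  {in `]0, 1[, forall x, 0 <= phi x} ->
  {in `]0, 1[ &, injective phi} ->
  {in `]0, 1[, forall x, 0 < phi x} ->
  (forall y, 0 < y -> exists2 x, x \in `]0, 1[ & phi x = y) ->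
  (* (ii) *)
  ~ H0 j0 ->
  (fun n => P [set om | Tstat n (X n om) j0 <= Tboot n (X n om) (V n 1%N om) j0])
     @ \oo --> 0%E ->
  (* (iii) *)
  (forall n om j k l, (1 <= k <= M n)%N -> (1 <= l <= M n)%N -> k <> l ->
     Tboot n (X n om) (V n k om) j <> Tboot n (X n om) (V n l om) j) ->
  (* conclusion: p_{n,M_n}(W_{n,M_n}^{[0]}) -> 0 in probability *)
  forall eps : R, 0 < eps ->
  (fun n => P [set om | eps <= `| pval_W (M n)
       (Wstat (M n) (lin_comb w phi)
          (boot_family (Tstat n) (Tboot n) (X n) (V n) om)) |])
     @ \oo --> 0%E.
Proof.
move=> mX mV mTstat mTboot indep ident M_oo w_gt0 phi_nonincr phi_ge0 _ phi_gt0
  phi_onto _ q_cvg0 _ eps eps_gt0.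
have [x x01 rx_eps] : exists2 x, x \in `]0, 1[ & 2 * r%:R * x < eps.
  apply: exists_itv01_mul_lt => //.
  by rewrite mulr_gt0 ?ltr0n // (leq_ltn_trans (leq0n j0) (ltn_ord j0)).
have sumw_phix_gt0 : 0 < (\sum_j w j) * phi x.
  rewrite mulr_gt0 ?phi_gt0 // (bigD1 j0) //= ltr_pwDl //.
  by apply: sumr_ge0 => j _; exact/ltW.
have [dl dl01 phi_dl] := phi_onto (2 * ((\sum_j w j) * phi x) / w j0)
  (divr_gt0 (mulr_gt0 (ltr0Sn R 1) sumw_phix_gt0) (w_gt0 j0)).
have phi_x_dl : (\sum_j w j) * phi x < w j0 * phi dl.
  by rewrite phi_dl mulrCA mulfV ?gt_eqF // mulr1; lra.
have dl_gt0 : 0 < dl by move: dl01; rewrite in_itv => /andP [].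
have [N MN] := M_oo (Num.truncn dl^-1).+1.
apply: (@squeeze_cvge _ _ _ _ (fun=> 0%E) _ (fun n => (2 / dl)%:E *
  P [set om | (Tstat n (X n om) j0 <= Tboot n (X n om) (V n 1%N om) j0)%R])%E).
- exists N => // n /= /MN M_ge; rewrite measure_ge0 /=.
  apply: (prob_pval_W_ge (mX n) (mV n) (mTstat n) (mTboot n) (indep n) (ident n)
    (M n) w phi j0 x dl eps) => //.
  have dl_inv_le : dl^-1 <= (M n)%:R.
    by apply: le_trans (ltW (truncnS_gt _)) _; rewrite ler_nat.
  by rewrite -(ler_pM2l dl_gt0) mulfV ?gt_eqF // in dl_inv_le.
- exact: cvg_cst.
- by rewrite -(mule0 (2 / dl)%:E); apply: cvgeZl.
Qed.
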